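(* For $\epsilon>0$ and $\Delta\in\mathbb{R}$ let $\mathrm{LB}(\alpha,\epsilon,\Delta):=\alpha\Delta+\alpha\int_{\alpha}^{1}\frac{1-t}{t(1-t)+\epsilon}\,dt+(1-\alpha)\int_{0}^{\alpha}\frac{t}{t(1-t)+\epsilon}\,dt$ for $\alpha\in[0,1]$, and $$\alpha^{*}_{\mathrm{approx}}(\epsilon,\Delta):=\frac{1-\sqrt{1+4\epsilon}}{2}+\frac{\sqrt{1+4\epsilon}}{1+e^{-\sqrt{1+4\epsilon}\,\Delta}}.$$ Then the maximizer of $\mathrm{LB}(\cdot,\epsilon,\Delta)$ over $\alpha\in[0,1]$ equals $\alpha^{*}_{\mathrm{approx}}(\epsilon,\Delta)$ if and only if $|\Delta|\le \frac{1}{\sqrt{1+4\epsilon}}\log\frac{(\sqrt{1+4\epsilon}+1)^2}{4\epsilon}$. Moreover, $\frac{1}{\sqrt{1+4\epsilon}}\log\frac{(\sqrt{1+4\epsilon}+1)^2}{4\epsilon}=-\log\epsilon+O(\epsilon\log\epsilon)$ as $\epsilon\to0^{+}$. *)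

From Stdlib Require Import Reals.
From Coquelicot Require Import Coquelicot.
Open Scope R_scope.

Definition LB (eps Delta alpha : R) : R :=
  alpha * Delta
  + alpha * RInt (fun t => (1 - t) / (t * (1 - t) + eps)) alpha 1
  + (1 - alpha) * RInt (fun t => t / (t * (1 - t) + eps)) 0 alpha.

Definition alpha_approx (eps Delta : R) : R :=
  (1 - sqrt (1 + 4 * eps)) / 2
  + sqrt (1 + 4 * eps) / (1 + exp (- sqrt (1 + 4 * eps) * Delta)).

Definition is_maximizer (eps Delta a : R) : Prop :=
  0 <= a <= 1 /\ forall b, 0 <= b <= 1 -> LB eps Delta b <= LB eps Delta a.

Definition threshold (eps : R) : R :=
  / sqrt (1 + 4 * eps) * ln ((sqrt (1 + 4 * eps) + 1) ^ 2 / (4 * eps)).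

From Stdlib Require Import Reals Lra Psatz.
From Coquelicot Require Import Coquelicot.
Open Scope R_scope.

(* With s = sqrt (1 + 4 eps), the denominator factors as
   t (1 - t) + eps = (p - t) (t - m) with roots p = (1 + s) / 2 > 1 and
   m = (1 - s) / 2 < 0, so partial fractions give LB in closed form on [0, 1],
   with derivative LB'(a) = Delta + (ln (p - a) - ln (a - m)) / s.  This is
   strictly decreasing on (m, p) and vanishes exactly at alpha_approx, so LB is
   strictly concave and its unique maximizer on [0, 1] is alpha_approx clamped
   to [0, 1].  It equals alpha_approx iff LB'(1) <= 0 <= LB'(0), and
   LB'(0), LB'(1) = Delta +/- threshold.  For the asymptotics,
   threshold = (2 ln ((1 + s) / 2) - ln eps) / s where s - 1 <= 2 eps. *)

Lemma ln_le_sub1 x : 0 < x -> ln x <= x - 1.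
Proof. intros Hx; pose proof (exp_ineq1_le (ln x)); rewrite exp_ln in * by exact Hx; lra. Qed.

Definition clamp (lo hi x : R) : R := Rmax lo (Rmin x hi).

Lemma clamp_in lo hi x : lo <= hi -> lo <= clamp lo hi x <= hi.
Proof.
intros Hlh; unfold clamp; split; [apply Rmax_l |].
apply Rmax_lub; [lra | apply Rmin_r].
Qed.

Lemma clamp_id lo hi x : lo <= hi -> clamp lo hi x = x <-> lo <= x <= hi.
Proof.
intros Hlh; split.
- intros <-; apply clamp_in, Hlh.
- intros Hx; unfold clamp; rewrite Rmin_left, Rmax_right; lra.
Qed.

Definition maximizes_on (lo hi : R) (f : R -> R) (a : R) : Prop :=
  lo <= a <= hi /\ forall b, lo <= b <= hi -> f b <= f a.

Lemma maximizes_on_ext lo hi f g a :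
  (forall x, lo <= x <= hi -> f x = g x) ->
  maximizes_on lo hi f a <-> maximizes_on lo hi g a.
Proof.
intros Efg; unfold maximizes_on; split; intros [Ha Hmax]; split; auto;
  intros b Hb; specialize (Hmax b Hb); rewrite ?Efg in * by assumption; lra.
Qed.

Lemma is_RInt_derive_open (F f : R -> R) m p a b :
  (forall x, m < x < p -> is_derive F x (f x)) ->
  (forall x, m < x < p -> continuous f x) ->
  m < a < p -> m < b < p -> is_RInt f a b (F b - F a).
Proof.
intros dF cf Ha Hb.
assert (Hab : forall x, Rmin a b <= x <= Rmax a b -> m < x < p).
{ intros x [Hx1 Hx2]; split.
  - apply Rlt_le_trans with (2 := Hx1), Rmin_glb_lt; lra.
  - apply Rle_lt_trans with (1 := Hx2), Rmax_lub_lt; lra. }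
apply (is_RInt_derive F f); intros x Hx; auto.
Qed.

Section StrictlyConcave.

Variables (f f' : R -> R) (m p lo hi z : R).
Hypothesis f_derive : forall x, m < x < p -> is_derive f x (f' x).
Hypothesis f'_decr : forall x y, m < x -> x < y < p -> f' y < f' x.
Hypotheses (m_lt_lo : m < lo) (lo_le_hi : lo <= hi) (hi_lt_p : hi < p).
Hypotheses (z_in : m < z < p) (f'_z : f' z = 0).

Lemma strict_max_of_variational a b :
  lo <= a <= hi -> (forall c, lo <= c <= hi -> f' a * (c - a) <= 0) ->
  lo <= b <= hi -> b <> a -> f b < f a.
Proof.
intros Ha Hvar Hb Hba; specialize (Hvar b Hb).
assert (df : forall x y, lo <= x < y -> y <= hi ->
          exists c, f y - f x = f' c * (y - x) /\ x < c < y).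
{ intros x y Hxy Hy; apply MVT_cor2; [lra |].
  intros c Hc; apply is_derive_Reals, f_derive; lra. }
destruct (Rlt_or_le a b) as [Hab | Hle].
- destruct (df a b) as [c [Ec Hc]]; try lra.
  assert (f' c < f' a) by (apply f'_decr; lra); nra.
- destruct (df b a) as [c [Ec Hc]]; try lra.
  assert (f' a < f' c) by (apply f'_decr; lra); nra.
Qed.

Lemma clamp_variational c :
  lo <= c <= hi -> f' (clamp lo hi z) * (c - clamp lo hi z) <= 0.
Proof.
intros Hc; unfold clamp.
destruct (Rlt_or_le z lo) as [Hzlo | Hloz].
- rewrite Rmin_left, Rmax_left by lra.
  assert (f' lo < f' z) by (apply f'_decr; lra); nra.
- destruct (Rlt_or_le hi z) as [Hhiz | Hzhi].
  + rewrite Rmin_right, Rmax_right by lra.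
    assert (f' z < f' hi) by (apply f'_decr; lra); nra.
  + rewrite Rmin_left, Rmax_right by lra; rewrite f'_z; lra.
Qed.

Lemma maximizes_on_iff_clamp a : maximizes_on lo hi f a <-> a = clamp lo hi z.
Proof.
pose proof (clamp_in lo hi z lo_le_hi) as Hcl.
split.
- intros [Ha Hmax]; destruct (Req_dec a (clamp lo hi z)) as [| Hne]; [easy |].
  specialize (Hmax _ Hcl).
  assert (f a < f (clamp lo hi z)); [| lra].
  apply strict_max_of_variational; auto using clamp_variational.
- intros ->; split; [exact Hcl |]; intros b Hb.
  destruct (Req_dec b (clamp lo hi z)) as [-> | Hne]; [lra |].
  left; apply strict_max_of_variational; auto using clamp_variational.
Qed.

Lemma zero_in_interval_iff : lo <= z <= hi <-> f' hi <= 0 <= f' lo.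
Proof.
assert (f'_decr_le : forall x y, m < x -> x <= y < p -> f' y <= f' x).
{ intros x y Hxy; destruct (Req_dec x y) as [-> | Hne]; [lra |].
  left; apply f'_decr; lra. }
split.
- intros Hz; rewrite <- f'_z; split; apply f'_decr_le; lra.
- intros [Hhi Hlo]; split; apply Rnot_lt_le; intros Hlt.
  + assert (f' lo < f' z) by (apply f'_decr; lra); lra.
  + assert (f' z < f' hi) by (apply f'_decr; lra); lra.
Qed.

End StrictlyConcave.

Section LowerBound.

Variable eps : R.
Hypothesis eps_gt0 : 0 < eps.

Let s := sqrt (1 + 4 * eps).
Let p := (1 + s) / 2.
Let m := (1 - s) / 2.

Lemma sqrt_disc_sqr : s * s = 1 + 4 * eps.
Proof. apply sqrt_sqrt; lra. Qed.

Lemma sqrt_disc_gt1 : 1 < s.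
Proof. rewrite <- sqrt_1; apply sqrt_lt_1_alt; lra. Qed.

Lemma sqrt_disc_sub1_le : s - 1 <= 2 * eps.
Proof. pose proof sqrt_disc_sqr; pose proof sqrt_disc_gt1; nra. Qed.

Lemma threshold_add_ln_bound :
  eps <= exp (-1) -> Rabs (threshold eps - - ln eps) <= 2 * Rabs (eps * ln eps).
Proof.
intros He1; pose proof sqrt_disc_gt1; pose proof sqrt_disc_sub1_le.
set (h := (s + 1) / 2); set (v := / s).
assert (Hv : s * v = 1) by (unfold v; field; lra).
assert (Hv0 : 0 < v) by (apply Rinv_0_lt_compat; lra).
assert (Eth : threshold eps - - ln eps = 2 * ln h * v - - ln eps * (1 - v)).
{ unfold threshold; fold s v.
  replace ((s + 1) ^ 2 / (4 * eps)) with (h * h / eps) by (unfold h; field; lra).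
  rewrite ln_div, ln_mult by (unfold h; nra); ring. }
assert (Hlnh : 0 <= ln h <= h - 1).
{ split; [rewrite <- ln_1; apply ln_le |apply ln_le_sub1]; unfold h; lra. }
assert (Eh : 2 * (h - 1) = s - 1) by (unfold h; field).
assert (Hlne : 1 <= - ln eps).
{ pose proof (ln_le _ _ eps_gt0 He1) as Hln; rewrite ln_exp in Hln; lra. }
assert (Hv1 : v < 1) by nra.
assert (Hlnh_v : 0 <= 2 * ln h * v <= 2 * eps) by (split; nra).
assert (H1_v : 0 <= 1 - v <= 2 * eps) by nra.
rewrite Eth, (Rabs_left1 (eps * ln eps)) by nra; apply Rabs_le; nra.
Qed.

Lemma m_lt0 : m < 0.
Proof. pose proof sqrt_disc_gt1; unfold m; lra. Qed.

Lemma p_gt1 : 1 < p.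
Proof. pose proof sqrt_disc_gt1; unfold p; lra. Qed.

Lemma quadratic_factor t : t * (1 - t) + eps = (p - t) * (t - m).
Proof. pose proof sqrt_disc_sqr; unfold p, m; nra. Qed.

Lemma quadratic_pos x : m < x < p -> 0 < x * (1 - x) + eps.
Proof. intros Hx; rewrite quadratic_factor; nra. Qed.

Let F x := (m * ln (x - m) - p * ln (p - x)) / s.

Lemma F_derive x : m < x < p -> is_derive F x (x / (x * (1 - x) + eps)).
Proof.
intros Hx; pose proof sqrt_disc_gt1.
rewrite quadratic_factor; unfold F; auto_derive; [lra |].
unfold p, m in *; field; lra.
Qed.

Lemma F_reflect_derive x :
  m < x < p -> is_derive (fun y => - F (1 - y)) x ((1 - x) / (x * (1 - x) + eps)).
Proof.
intros Hx; pose proof sqrt_disc_gt1.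
rewrite quadratic_factor; unfold F; auto_derive; [unfold p, m in *; lra |].
unfold p, m in *; field; lra.
Qed.

Variable Delta : R.

Let LB_closed a := a * Delta + a * (F (1 - a) - F 0) + (1 - a) * (F a - F 0).

Lemma LB_closed_form a : 0 <= a <= 1 -> LB eps Delta a = LB_closed a.
Proof.
intros Ha; pose proof m_lt0; pose proof p_gt1.
assert (I0a : is_RInt (fun t => t / (t * (1 - t) + eps)) 0 a (F a - F 0)).
{ apply (is_RInt_derive_open F _ m p); try lra; [exact F_derive |].
  intros x Hx; pose proof (quadratic_pos x Hx).
  apply (@ex_derive_continuous R_AbsRing R_NormedModule); auto_derive; lra. }
assert (Ia1 : is_RInt (fun t => (1 - t) / (t * (1 - t) + eps)) a 1
                (- F (1 - 1) - - F (1 - a))).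
{ apply (is_RInt_derive_open (fun y => - F (1 - y)) _ m p); try lra;
    [exact F_reflect_derive |].
  intros x Hx; pose proof (quadratic_pos x Hx).
  apply (@ex_derive_continuous R_AbsRing R_NormedModule); auto_derive; lra. }
unfold LB, LB_closed.
rewrite (is_RInt_unique _ _ _ _ I0a), (is_RInt_unique _ _ _ _ Ia1).
replace (1 - 1) with 0 by ring; ring.
Qed.

Let LB_slope a := Delta + (ln (p - a) - ln (a - m)) / s.

Lemma LB_closed_derive a : m < a < p -> is_derive LB_closed a (LB_slope a).
Proof.
intros Ha; pose proof sqrt_disc_gt1.
unfold LB_closed, LB_slope, F; auto_derive; [unfold p, m in *; lra |].
(* As p + m = 1, reflection swaps p - a and a - m; then the terms
   a F'(1 - a) and (1 - a) F'(a) cancel. *)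
replace (1 + - a + - m) with (p - a) by (unfold p, m; lra).
replace (p + - (1 + - a)) with (a - m) by (unfold p, m; lra).
replace (p + - a) with (p - a) by ring; replace (a + - m) with (a - m) by ring.
unfold p, m in *; field; lra.
Qed.

Lemma LB_slope_decr x y : m < x -> x < y < p -> LB_slope y < LB_slope x.
Proof.
intros Hx Hy; pose proof sqrt_disc_gt1.
assert (ln (p - y) < ln (p - x)) by (apply ln_increasing; lra).
assert (ln (x - m) < ln (y - m)) by (apply ln_increasing; lra).
unfold LB_slope; apply Rplus_lt_compat_l, Rmult_lt_compat_r;
  [apply Rinv_0_lt_compat |]; lra.
Qed.

Lemma alpha_approx_slope_root :
  m < alpha_approx eps Delta < p /\ LB_slope (alpha_approx eps Delta) = 0.
Proof.
pose proof sqrt_disc_gt1.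
set (e := exp (- s * Delta)); assert (He : 0 < e) by apply exp_pos.
assert (Em : alpha_approx eps Delta - m = s / (1 + e))
  by (unfold alpha_approx, m; fold s e; ring).
assert (Ep : p - alpha_approx eps Delta = (alpha_approx eps Delta - m) * e)
  by (rewrite Em; unfold alpha_approx, p; fold s e; field; lra).
assert (0 < s / (1 + e)) by (apply Rdiv_lt_0_compat; lra).
split; [nra |].
unfold LB_slope; rewrite Ep, ln_mult by nra; unfold e; rewrite ln_exp; field; lra.
Qed.

Lemma threshold_eq : threshold eps = (ln p - ln (- m)) / s.
Proof.
pose proof sqrt_disc_sqr; pose proof sqrt_disc_gt1.
unfold threshold; fold s; rewrite <- ln_div by (unfold p, m; lra).
replace ((s + 1) ^ 2 / (4 * eps)) with (p / - m)
  by (replace (4 * eps) with (s * s - 1) by lra; unfold p, m; field; lra).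
unfold Rdiv; ring.
Qed.

Lemma LB_slope_0 : LB_slope 0 = Delta + threshold eps.
Proof.
rewrite threshold_eq; unfold LB_slope.
replace (p - 0) with p by ring; replace (0 - m) with (- m) by ring.
reflexivity.
Qed.

Lemma LB_slope_1 : LB_slope 1 = Delta - threshold eps.
Proof.
rewrite threshold_eq; unfold LB_slope.
replace (p - 1) with (- m) by (unfold p, m; field).
replace (1 - m) with p by (unfold p, m; field).
field; pose proof sqrt_disc_gt1; lra.
Qed.

Lemma is_maximizer_iff_clamp a :
  is_maximizer eps Delta a <-> a = clamp 0 1 (alpha_approx eps Delta).
Proof.
destruct alpha_approx_slope_root as [Hz Hz0]; pose proof m_lt0; pose proof p_gt1.
change (is_maximizer eps Delta a) with (maximizes_on 0 1 (LB eps Delta) a).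
rewrite (maximizes_on_ext _ _ _ LB_closed) by exact LB_closed_form.
apply (maximizes_on_iff_clamp _ LB_slope m p);
  auto using LB_closed_derive, LB_slope_decr; lra.
Qed.

Lemma alpha_approx_in_unit_iff :
  0 <= alpha_approx eps Delta <= 1 <-> Rabs Delta <= threshold eps.
Proof.
destruct alpha_approx_slope_root as [Hz Hz0]; pose proof m_lt0; pose proof p_gt1.
rewrite (zero_in_interval_iff LB_slope m p); auto using LB_slope_decr; try lra.
rewrite LB_slope_0, LB_slope_1; unfold Rabs; destruct (Rcase_abs Delta); lra.
Qed.

End LowerBound.

Theorem lemma5 :
  (forall eps Delta : R, 0 < eps ->
     (exists! a, is_maximizer eps Delta a) /\
     (forall a, is_maximizer eps Delta a ->
        (a = alpha_approx eps Delta <-> Rabs Delta <= threshold eps)))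
  /\
  (exists C delta : R, 0 < delta /\
     forall eps, 0 < eps < delta ->
       Rabs (threshold eps - (- ln eps)) <= C * Rabs (eps * ln eps)).
Proof.
split.
- intros eps Delta He; split.
  + exists (clamp 0 1 (alpha_approx eps Delta)); split.
    * now apply is_maximizer_iff_clamp.
    * intros a Ha; symmetry; now apply (is_maximizer_iff_clamp eps He Delta).
  + intros a Ha; apply (is_maximizer_iff_clamp eps He Delta) in Ha as ->.
    rewrite <- alpha_approx_in_unit_iff by exact He.
    apply clamp_id; lra.
- exists 2, (exp (-1)); split; [apply exp_pos |].
  intros eps [He He1]; apply threshold_add_ln_bound; lra.
Qed.
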